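(* Let $\Gamma\in[0,1]$, $d_0\in(0,1]$, and $\gamma_N=\Gamma/(N-1)$. For $N\ge2$ define $h_N(k)$, $k=1,\dots,N$, by $h_N(N)=N$ and $h_N(k)=k\Big[1+\gamma_N(N-k)\frac{h_N(k+1)}{k+1}\Big]$ for $k<N$; equivalently $h_N(k)=k\big[1+(N-k)\gamma_N\big[1+(N-k-1)\gamma_N\big[1+\cdots\big]\big]\big]$ (the nested expression terminating after $N-k$ levels). Let $k_N\in\{1,\dots,N\}$ satisfy $k_N/N\to d_0$. Then $$\lim_{N\to\infty}\frac{h_N(k_N)}{N}=\frac{d_0}{1-\Gamma+\Gamma d_0}.$$ *)

From Stdlib Require Import Reals Lra Lia.
Open Scope R_scope.

Definition gammaN (Gam : R) (N : nat) : R := Gam / (INR N - 1).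

(* hrec Gam N j = h_N(N - j), computed by recursion on j = N - k
   (the number of nesting levels):
     h_N(N) = N,
     h_N(k) = k * (1 + gamma_N (N - k) h_N(k+1)/(k+1)). *)
Fixpoint hrec (Gam : R) (N : nat) (j : nat) : R :=
  match j with
  | O => INR N
  | S j' => INR (N - S j') *
            (1 + gammaN Gam N * INR (S j') * hrec Gam N j' / INR (N - j'))
  end.

Definition h (Gam : R) (N k : nat) : R := hrec Gam N (N - k).

From Stdlib Require Import Reals Lra Lia.
From Coquelicot Require Import Coquelicot.
Open Scope R_scope.

(* Unfolding the recursion, h_N(k) = k * nested(gamma_N, N - k), where
     nested g 0 = 1,   nested g (j+1) = 1 + g (j+1) nested g j
   is the nested expression 1 + j g [1 + (j-1) g [1 + ...]].  Hence
     h_N(k_N) / N = (k_N / N) * nested(gamma_N, N - k_N).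
   For a = g j <= rho < 1 an induction on j traps the nested expression:
     1 / (1 - a + g rho/(1-rho)) <= nested g j <= 1 / (1 - a).
   Along our sequence g = gamma_N -> 0 while gamma_N (N - k_N) -> x = Gam (1 - d0),
   so both bounds tend to 1/(1-x) and nested(gamma_N, N - k_N) -> 1/(1-x)
   (lemma [nested_lim], a general statement about sequences g_N, j_N).
   Multiplying by k_N / N -> d0 gives d0 / (1 - x) = d0 / (1 - Gam + Gam d0). *)

Fixpoint nested (g : R) (j : nat) : R :=
  match j with O => 1 | S j' => 1 + g * INR (S j') * nested g j' end.

Lemma hrec_nested (Gam : R) (N j : nat) :
  (j <= N)%nat -> hrec Gam N j = INR (N - j) * nested (gammaN Gam N) j.
Proof.
  induction j as [|j IH]; intros Hj.
  - cbn [hrec nested]. rewrite Nat.sub_0_r. ring.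
  - cbn [hrec nested]. rewrite IH by lia.
    assert (INR (N - j) <> 0) by (apply not_0_INR; lia).
    field. assumption.
Qed.

Lemma h_over_N (Gam : R) (N k : nat) :
  (1 <= k <= N)%nat ->
  h Gam N k / INR N = INR k / INR N * nested (gammaN Gam N) (N - k).
Proof.
  intros Hk. unfold h. rewrite hrec_nested by lia.
  replace (N - (N - k))%nat with k by lia.
  assert (INR N <> 0) by (apply not_0_INR; lia).
  field. assumption.
Qed.

Lemma div_le_cross (x y z w : R) :
  0 < y -> 0 < w -> x * w <= z * y -> x / y <= z / w.
Proof.
  intros Hy Hw H.
  replace (x / y) with (x * w * (/ y * / w)) by (field; lra).
  replace (z / w) with (z * y * (/ y * / w)) by (field; lra).
  apply Rmult_le_compat_r; [|exact H].
  apply Rlt_le, Rmult_lt_0_compat; apply Rinv_0_lt_compat; assumption.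
Qed.

(* Two-sided bound on the nested expression while g j stays below rho < 1.
   The slack term g rho/(1-rho) in the lower bound absorbs the error
   made at each level, and it vanishes as g -> 0. *)
Lemma nested_bounds (g rho : R) (j : nat) :
  0 <= g -> 0 <= rho < 1 -> g * INR j <= rho ->
  1 / (1 - g * INR j + g * rho / (1 - rho)) <= nested g j <= 1 / (1 - g * INR j).
Proof.
  intros Hg Hr.
  set (th := g * rho / (1 - rho)).
  assert (Hth : th * (1 - rho) = g * rho) by (unfold th; field; lra).
  assert (Hth0 : 0 <= th).
  { apply Rmult_le_pos; [nra|]. apply Rlt_le, Rinv_0_lt_compat; lra. }
  induction j as [|j IH]; intros Hj; cbn [nested].
  - rewrite Rmult_0_r in *. split.
    + apply Rle_trans with (1 / 1); [apply div_le_cross; lra | right; field].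
    + right. field.
  - rewrite S_INR in *.
    set (a := g * INR j) in *.
    assert (Ha0 : 0 <= a) by (apply Rmult_le_pos; [exact Hg | apply pos_INR]).
    replace (g * (INR j + 1)) with (a + g) in * by (unfold a; ring).
    destruct IH as [IL IU]; [lra|].
    split.
    + (* one level of the lower bound: c th >= g (a + g) with c = 1 - a + th *)
      apply Rle_trans with ((1 - a + th + (a + g)) / (1 - a + th)).
      * apply div_le_cross; nra.
      * replace ((1 - a + th + (a + g)) / (1 - a + th))
          with (1 + (a + g) * (1 / (1 - a + th))) by (field; lra).
        apply Rplus_le_compat_l, Rmult_le_compat_l; lra.
    + apply Rle_trans with (1 + (a + g) * (1 / (1 - (a + g)))).
      * apply Rplus_le_compat_l, Rmult_le_compat_l; [lra|].
        apply Rle_trans with (1 := IU). apply div_le_cross; lra.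
      * right. field. lra.
Qed.

Lemma nested_lim (g : nat -> R) (j : nat -> nat) (x : R) :
  eventually (fun N => 0 <= g N) -> 0 <= x < 1 ->
  is_lim_seq g 0 -> is_lim_seq (fun N => g N * INR (j N)) x ->
  is_lim_seq (fun N => nested (g N) (j N)) (1 / (1 - x)).
Proof.
  intros Hg Hx Lg La.
  set (rho := (x + 1) / 2).
  assert (Hr : 0 <= rho < 1) by (unfold rho; lra).
  assert (Ev : eventually (fun N => g N * INR (j N) <= rho)).
  { apply is_lim_seq_Reals in La.
    destruct (La ((1 - x) / 2)) as [N0 HN0]; [lra|].
    exists N0. intros N HN. specialize (HN0 N HN).
    apply Rabs_def2 in HN0. unfold rho. lra. }
  apply is_lim_seq_le_le_loc with
    (u := fun N => 1 / (1 - g N * INR (j N) + g N * rho / (1 - rho)))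
    (w := fun N => 1 / (1 - g N * INR (j N))).
  - destruct Hg as [N1 HN1], Ev as [N0 HN0]. exists (Nat.max N0 N1). intros N HN.
    apply nested_bounds; [apply HN1 | exact Hr | apply HN0]; lia.
  - replace (1 / (1 - x)) with (1 / (1 - x + 0 * rho / (1 - rho))) by (field; lra).
    apply is_lim_seq_div'; [apply is_lim_seq_const| |lra].
    apply is_lim_seq_plus';
      [apply is_lim_seq_minus'; [apply is_lim_seq_const | exact La]|].
    apply is_lim_seq_div'; [| apply is_lim_seq_const | lra].
    apply is_lim_seq_mult'; [exact Lg | apply is_lim_seq_const].
  - apply is_lim_seq_div'; [apply is_lim_seq_const| |lra].
    apply is_lim_seq_minus'; [apply is_lim_seq_const | exact La].
Qed.

Lemma lim_invN : is_lim_seq (fun N => / INR N) 0.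
Proof.
  pose proof (is_lim_seq_inv _ _ is_lim_seq_INR) as H.
  apply H. discriminate.
Qed.

Lemma gammaN_lim (Gam : R) : is_lim_seq (gammaN Gam) 0.
Proof.
  apply is_lim_seq_ext_loc with (fun N => Gam * / INR N / (1 - / INR N)).
  - exists 2%nat. intros N HN.
    assert (2 <= INR N) by (apply (le_INR 2); exact HN).
    unfold gammaN. field. lra.
  - replace 0 with (Gam * 0 / (1 - 0)) by field.
    apply is_lim_seq_div'; [| |lra].
    + apply is_lim_seq_mult'; [apply is_lim_seq_const | exact lim_invN].
    + apply is_lim_seq_minus'; [apply is_lim_seq_const | exact lim_invN].
Qed.

Lemma depth_lim (Gam d0 : R) (kN : nat -> nat) :
  (forall N : nat, (2 <= N)%nat -> (kN N <= N)%nat) ->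
  is_lim_seq (fun N => INR (kN N) / INR N) d0 ->
  is_lim_seq (fun N => gammaN Gam N * INR (N - kN N)) (Gam * (1 - d0)).
Proof.
  intros Hk Hu.
  apply is_lim_seq_ext_loc
    with (fun N => Gam * (1 - INR (kN N) / INR N) / (1 - / INR N)).
  - exists 2%nat. intros N HN.
    assert (2 <= INR N) by (apply (le_INR 2); exact HN).
    unfold gammaN. rewrite minus_INR by (apply Hk; exact HN).
    field. lra.
  - replace (Gam * (1 - d0)) with (Gam * (1 - d0) / (1 - 0)) by field.
    apply is_lim_seq_div'; [| |lra].
    + apply is_lim_seq_mult'; [apply is_lim_seq_const|].
      apply is_lim_seq_minus'; [apply is_lim_seq_const | exact Hu].
    + apply is_lim_seq_minus'; [apply is_lim_seq_const | exact lim_invN].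
Qed.

Lemma gammaN_nonneg (Gam : R) (N : nat) :
  0 <= Gam -> (2 <= N)%nat -> 0 <= gammaN Gam N.
Proof.
  intros HG HN.
  assert (2 <= INR N) by (apply (le_INR 2); exact HN).
  apply Rmult_le_pos; [exact HG|]. apply Rlt_le, Rinv_0_lt_compat; lra.
Qed.

Theorem mainTheorem11 (Gam d0 : R) (kN : nat -> nat) :
  0 <= Gam <= 1 ->
  0 < d0 <= 1 ->
  (forall N : nat, (2 <= N)%nat -> (1 <= kN N <= N)%nat) ->
  Un_cv (fun N => INR (kN N) / INR N) d0 ->
  Un_cv (fun N => h Gam N (kN N) / INR N) (d0 / (1 - Gam + Gam * d0)).
Proof.
  intros HG Hd Hk Hu.
  apply is_lim_seq_Reals in Hu. apply is_lim_seq_Reals.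
  assert (Hx : 0 <= Gam * (1 - d0) < 1) by (split; nra).
  replace (d0 / (1 - Gam + Gam * d0)) with (d0 * (1 / (1 - Gam * (1 - d0))))
    by (field; lra).
  apply is_lim_seq_ext_loc
    with (fun N => INR (kN N) / INR N * nested (gammaN Gam N) (N - kN N)).
  { exists 2%nat. intros N HN. symmetry. apply h_over_N, Hk, HN. }
  apply is_lim_seq_mult'; [exact Hu|].
  apply nested_lim; [| exact Hx | apply gammaN_lim |].
  - exists 2%nat. intros N HN. apply gammaN_nonneg; [apply HG | exact HN].
  - apply depth_lim; [intros N HN; apply Hk, HN | exact Hu].
Qed.
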